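(* Let $\mathbf{m}\in\mathbb{R}^{kn\times kn}$ be diagonal with strictly positive diagonal and let $b_n=(\mathbf{x}'\mathbf{m}\pi\mathbf{x})^{+}\mathbf{x}'\mathbf{m}\pi y$. If there exists $\mathbf{t}\in\mathbb{R}^{(k+p)\times k}$ with $\mathbf{x}\mathbf{t}=\mathbf{m}^{-1}\pi^{-1}\mathbf{1}$ (i.e. every column of $\mathbf{m}^{-1}\pi^{-1}\mathbf{1}$ lies in the column space of $\mathbf{x}$), then $$\frac1n\mathbf{1}'\mathbf{x}b_n=\frac1n\mathbf{1}'y,$$ i.e. the probability limit of the completely imputed (and WLS) estimator equals the vector of average potential outcomes.
   Context: $k$ arms, $n$ units, $p$ covariates. $y\in\mathbb{R}^{kn}$ stacks the potential outcome vectors of the $k$ arms. $\pi\in\mathbb{R}^{kn\times kn}$ is the diagonal matrix of assignment probabilities $\pi_{ai}\in(0,1)$ (ordered arm by arm). $\mathbf{1}=I_k\otimes1_n\in\mathbb{R}^{kn\times k}$. With covariate matrix $X\in\mathbb{R}^{n\times p}$, $\mathbf{x}=[\mathbf{1}\mid1_k\otimes X]\in\mathbb{R}^{kn\times(k+p)}$. $A^+$ is the Moore–Penrose inverse. *)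

From HB Require Import structures.
From mathcomp Require Import all_boot all_order all_algebra.
Set Implicit Arguments. Unset Strict Implicit. Unset Printing Implicit Defensive.
Import Order.TTheory GRing.Theory Num.Theory.
Local Open Scope ring_scope.

(* Row index r : 'I_(k*n) of a stacked vector encodes (arm a, unit i)
   with r = a * n + i (arm-by-arm ordering). *)
Lemma arm_lt (k n : nat) (r : 'I_(k * n)) : (r %/ n < k)%N.
Proof.
case: n r => [|n] r; first by case: r => r; rewrite muln0.
by rewrite ltn_divLR // ltn_ord.
Qed.

Lemma unit_lt (k n : nat) (r : 'I_(k * n)) : (r %% n < n)%N.
Proof.
case: n r => [|n] r; first by case: r => r; rewrite muln0.
by rewrite ltn_pmod.
Qed.

Definition arm_of (k n : nat) (r : 'I_(k * n)) : 'I_k := Ordinal (arm_lt r).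
Definition unit_of (k n : nat) (r : 'I_(k * n)) : 'I_n := Ordinal (unit_lt r).

(* bold 1 = I_k (x) 1_n *)
Definition onesmx (R : nzRingType) (k n : nat) : 'M[R]_(k * n, k) :=
  \matrix_(r, b) (arm_of r == b)%:R.

(* bold x = [ 1 | 1_k (x) X ] *)
Definition xmat (R : nzRingType) (k n p : nat) (X : 'M[R]_(n, p))
  : 'M[R]_(k * n, k + p) :=
  row_mx (onesmx R k n) (\matrix_(r, j) X (unit_of r) j).

Definition is_MP_inverse (R : nzRingType) (m n : nat)
  (A : 'M[R]_(m, n)) (B : 'M[R]_(n, m)) : Prop :=
  [/\ A *m B *m A = A, B *m A *m B = B,
      (A *m B)^T = A *m B & (B *m A)^T = B *m A].

From HB Require Import structures.
From mathcomp Require Import all_boot all_order all_algebra.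
Set Implicit Arguments. Unset Strict Implicit. Unset Printing Implicit Defensive.
Import Order.TTheory GRing.Theory Num.Theory.
Local Open Scope ring_scope.

(* With W := m pi, the hypothesis on t says 1 = W x t, so 1' x b_n = t' (A A^+) x' W y
   for the weighted Gram matrix A := x' W x.  Since W is positive definite, A A^+ fixes
   x' W (the symmetric idempotent 1 - A A^+ kills A, hence kills x' W), and what remains
   is t' x' W y = 1' y. *)

Section WeightedGram.

Variables (R : realDomainType) (m q : nat) (w : 'rV[R]_m).
Hypothesis w_gt0 : forall r, 0 < w 0 r.

Lemma diag_quad_eq0 (u : 'M[R]_(m, q)) : u^T *m diag_mx w *m u = 0 -> u = 0.
Proof.
move=> uWu0; apply/matrixP => r i.
have /psumr_eq0P sq0 : \sum_j u j i * w 0 j * u j i = 0.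
  transitivity ((u^T *m diag_mx w *m u) i i); last by rewrite uWu0 mxE.
  by rewrite mul_mx_diag mxE; apply: eq_bigr => j _; rewrite !mxE.
have /sq0 : forall j, true -> 0 <= u j i * w 0 j * u j i.
  by move=> j _; rewrite mulrAC -expr2 mulr_ge0 ?sqr_ge0 ?ltW ?w_gt0.
move=> /(_ r isT) /eqP; rewrite -mulrA !mulf_eq0 (gt_eqF (w_gt0 r)) orbb.
by rewrite mxE => /eqP.
Qed.

Lemma gram_ginv_proj (x : 'M[R]_(m, q)) (B : 'M[R]_q) :
  let A := x^T *m diag_mx w *m x in
  A *m B *m A = A -> (A *m B)^T = A *m B ->
  A *m B *m (x^T *m diag_mx w) = x^T *m diag_mx w.
Proof.
move=> A ABA sym_AB; set P := 1%:M - A *m B.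
have symP : P^T = P by rewrite linearB /= trmx1 sym_AB.
have PA0 : P *m A = 0 by rewrite mulmxBl mul1mx ABA subrr.
have xP0 : x *m P = 0.
  apply: diag_quad_eq0; rewrite trmx_mul symP.
  have -> : P *m x^T *m diag_mx w *m (x *m P) = P *m A *m P by rewrite /A !mulmxA.
  by rewrite PA0 mul0mx.
have : (x *m P)^T *m diag_mx w = 0 by rewrite xP0 trmx0 mul0mx.
rewrite trmx_mul symP !mulmxBl mul1mx => /eqP.
by rewrite subr_eq0 eq_sym mulmxA => /eqP.
Qed.

End WeightedGram.

Lemma unitmx_diag (F : fieldType) n (d : 'rV[F]_n) :
  (forall i, d 0 i != 0) -> diag_mx d \in unitmx.
Proof.
by move=> d_neq0; rewrite unitmxE det_diag unitfE; apply/prodf_neq0 => i _.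
Qed.

Theorem mainTheorem7 (R : realFieldType) (k n p : nat)
  (X : 'M[R]_(n, p)) (y : 'cV[R]_(k * n))
  (pid : 'rV[R]_(k * n)) (md : 'rV[R]_(k * n))
  (Hpi : forall r, 0 < pid 0 r < 1)
  (Hm : forall r, 0 < md 0 r)
  (B : 'M[R]_(k + p))
  (HB : is_MP_inverse
          ((xmat k X)^T *m diag_mx md *m diag_mx pid *m xmat k X) B) :
  (exists t : 'M[R]_(k + p, k),
      xmat k X *m t = invmx (diag_mx md) *m invmx (diag_mx pid) *m onesmx R k n) ->
  let bn := B *m ((xmat k X)^T *m diag_mx md *m diag_mx pid *m y) in
  (n%:R)^-1 *: ((onesmx R k n)^T *m xmat k X *m bn)
    = (n%:R)^-1 *: ((onesmx R k n)^T *m y).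
Proof.
move=> [t xt] bn; rewrite /bn; congr (_ *: _).
have pid_gt0 r : 0 < pid 0 r by case/andP: (Hpi r).
set x := xmat k X in HB xt *; set O := onesmx R k n in xt *.
have O_eq : O = diag_mx md *m diag_mx pid *m x *m t.
  rewrite -mulmxA xt diag_mxC !mulmxA mulmxK ?mulmxV ?mul1mx //;
  by apply: unitmx_diag => i; rewrite gt_eqF.
case: HB => ABA _ sym_AB _.
rewrite -!(mulmxA x^T (diag_mx md)) mulmx_diag in ABA sym_AB O_eq *.
set w := \row_j (md 0 j * pid 0 j) in ABA sym_AB O_eq *.
have w_gt0 r : 0 < w 0 r by rewrite mxE mulr_gt0.
have proj := gram_ginv_proj w_gt0 ABA sym_AB.
rewrite O_eq !trmx_mul tr_diag_mx -{3}proj.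
by rewrite !mulmxA.
Qed.
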